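(* Let $q=r^2$ where $r$ is a prime power and let $s$ be a positive integer. Let $C_1,\dots,C_s$ be linear codes of the same length $m$ over $\mathbb{F}_q$. If $A\in M_{s,s}(\mathbb{F}_q)$ satisfies $AA^\dagger=\lambda J_s$ for some nonzero $\lambda\in\mathbb{F}_q$ and $C_i=C_{s-i+1}^{\perp_H}$ for all $1\le i\le s$, then the matrix-product code $C_A=[C_1,\dots,C_s]\cdot A$ is Hermitian self-dual, i.e., $C_A=C_A^{\perp_H}$.
   Context: For $a\in\mathbb{F}_q$, $\overline{a}:=a^r$. For a matrix $A=[a_{ij}]$ over $\mathbb{F}_q$, $A^\dagger:=[\overline{a_{ji}}]$. $J_s$ is the $s\times s$ anti-diagonal matrix with all anti-diagonal entries equal to $1$ and all other entries $0$. The Hermitian inner product on $\mathbb{F}_q^n$ is $\langle u,v\rangle_H=\sum_i u_i\overline{v_i}$, and $C^{\perp_H}$ is the dual of $C$ with respect to it. If $C_i$ has generator matrix $G_i$ and $A=[a_{ij}]\in M_{s,l}(\mathbb{F}_q)$, the matrix-product code $[C_1,\dots,C_s]\cdot A$ is the linear code of length $ml$ generated by the block matrix whose $(i,j)$ block is $a_{ij}G_i$. *)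

From HB Require Import structures.
From mathcomp Require Import all_boot all_order all_algebra all_field.
Set Implicit Arguments. Unset Strict Implicit. Unset Printing Implicit Defensive.
Import GRing.Theory.
Local Open Scope ring_scope.

(* Conjugation a |-> a^r (the Frobenius of order 2 when #|F| = r^2). *)
Definition hconj (F : finFieldType) (r : nat) (a : F) : F := a ^+ r.

Definition hdagger (F : finFieldType) (r : nat) (k l : nat) (A : 'M[F]_(k, l))
  : 'M[F]_(l, k) := (map_mx (hconj r) A)^T.

Definition antidiag (F : finFieldType) (s : nat) : 'M[F]_s :=
  \matrix_(i < s, j < s) ((j == rev_ord i)%:R).

Definition hdot (F : finFieldType) (r : nat) (n : nat) (u v : 'rV[F]_n) : F :=
  \sum_(j < n) u 0 j * hconj r (v 0 j).

(* A linear code of length n is represented by a generator matrix G; the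
   code is the row space of G: v is a codeword iff (v <= G)%MS. *)
Definition in_code (F : finFieldType) (k n : nat) (G : 'M[F]_(k, n)) (v : 'rV[F]_n)
  : Prop := (v <= G)%MS.

Definition in_hdual (F : finFieldType) (r : nat) (k n : nat) (G : 'M[F]_(k, n))
  (v : 'rV[F]_n) : Prop :=
  forall u : 'rV[F]_n, (u <= G)%MS -> hdot r u v = 0.

(* Generator matrix of the matrix-product code [C_1,...,C_s] . A, where C_i is
   generated by G i : 'M_(k i, m) and A : 'M_(s, l): the block matrix whose
   (i,j) block is a_ij G_i. *)
Definition mpc_gen (F : finFieldType) (s l m : nat) (k : 'I_s -> nat)
  (G : forall i : 'I_s, 'M[F]_(k i, m)) (A : 'M[F]_(s, l))
  : 'M[F]_(\sum_(i < s) k i, \sum_(j < l) m) :=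
  \mxblock_(i < s, j < l) (A i j *: G i).

(* Write a codeword of C_A blockwise as v_j = sum_i a_ij c_i with c_i in C_i.
   Expanding the Hermitian product of two such words gives
   <u, v>_H = sum_{i,i'} (A A^dagger)_{i i'} <c_i, d_i'>_H = lambda sum_i <c_i, d_{s-i+1}>_H,
   which vanishes because C_i and C_{s-i+1} are Hermitian duals; so C_A is
   self-orthogonal.  Conversely, A is invertible with inverse
   lambda^-1 A^dagger J_s, so any v is the encoding of some words w_i; testing v
   against the codewords of C_A built from a single c in C_{s-i+1} shows that
   w_i lies in the dual of C_{s-i+1}, i.e. in C_i, hence v lies in C_A. *)
From HB Require Import structures.
From mathcomp Require Import all_boot all_order all_algebra all_field.
Import GRing.Theory.
Local Open Scope ring_scope.
Set Implicit Arguments. Unset Strict Implicit.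

Lemma sum_antidiag_mul (F : finFieldType) s (f : 'I_s -> F) i :
  \sum_j antidiag F s i j * f j = f (rev_ord i).
Proof.
rewrite (bigD1 (rev_ord i)) //= mxE eqxx mul1r big1 ?addr0 // => j ne_j.
by rewrite mxE (negbTE ne_j) mul0r.
Qed.

Lemma antidiag_sqr (F : finFieldType) s : antidiag F s *m antidiag F s = 1%:M.
Proof.
apply/matrixP => i j; rewrite mxE sum_antidiag_mul !mxE rev_ordK.
by rewrite eq_sym.
Qed.

Section Hermitian.

Variables (F : finFieldType) (p e r : nat).
Hypotheses (pcharF : p \in [pchar F]) (r_def : r = (p ^ e)%N).

Lemma hconjD (x y : F) : hconj r (x + y) = hconj r x + hconj r y.
Proof.
by rewrite /hconj exprDn_pchar // r_def pnatX (pnatE _ (pcharf_prime pcharF)) pcharF.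
Qed.

Lemma hconjM (x y : F) : hconj r (x * y) = hconj r x * hconj r y.
Proof. exact: exprMn. Qed.

Lemma hconj0 : hconj r (0 : F) = 0.
Proof.
by rewrite /hconj expr0n r_def expn_eq0 eqn0Ngt (prime_gt0 (pcharf_prime pcharF)).
Qed.

Implicit Types (n : nat).

Lemma hdot0l n (v : 'rV[F]_n) : hdot r 0 v = 0.
Proof. by rewrite /hdot big1 // => j _; rewrite mxE mul0r. Qed.

Lemma hdotZl n a (u v : 'rV[F]_n) : hdot r (a *: u) v = a * hdot r u v.
Proof. by rewrite /hdot mulr_sumr; apply: eq_bigr => j _; rewrite mxE mulrA. Qed.

Lemma hdot_suml n (I : finType) (f : I -> 'rV[F]_n) v :
  hdot r (\sum_i f i) v = \sum_i hdot r (f i) v.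
Proof.
rewrite /hdot exchange_big /=; apply: eq_bigr => j _.
by rewrite summxE mulr_suml.
Qed.

Lemma hdotE n (u v : 'rV[F]_n) : hdot r u v = (u *m hdagger r v) 0 0.
Proof. by rewrite /hdot !mxE; apply: eq_bigr => j _; rewrite !mxE. Qed.

Lemma hdot_blocks s m (u v : 'rV[F]_(\sum_(j < s) m)) :
  hdot r u v = \sum_j hdot r (submxrow u j) (submxrow v j).
Proof.
rewrite hdotE /hdagger -[u]submxrowK -[map_mx _ v]submxrowK tr_mxrow.
rewrite mul_mxrow_mxcol summxE; apply: eq_bigr => j _.
rewrite hdotE mxrowK /hdagger; congr ((_ *m _^T) 0 0).
by apply/matrixP => a b; rewrite !mxE.
Qed.

Lemma hdotZr n a (u v : 'rV[F]_n) : hdot r u (a *: v) = hconj r a * hdot r u v.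
Proof.
rewrite /hdot mulr_sumr; apply: eq_bigr => j _.
by rewrite mxE hconjM mulrCA.
Qed.

Lemma hdot_sumr n (I : finType) (f : I -> 'rV[F]_n) u :
  hdot r u (\sum_i f i) = \sum_i hdot r u (f i).
Proof.
rewrite /hdot exchange_big /=; apply: eq_bigr => j _.
by rewrite summxE (big_morph _ hconjD hconj0) mulr_sumr.
Qed.

Variables (s m : nat).

Definition mpc_encode l (A : 'M[F]_(s, l)) (c : 'I_s -> 'rV[F]_m)
  : 'rV[F]_(\sum_(j < l) m) :=
  \mxrow_j \sum_i A i j *: c i.

Definition mpc_decode l (B : 'M[F]_(l, s)) (v : 'rV[F]_(\sum_(j < l) m))
  : 'I_s -> 'rV[F]_m :=
  fun i => \sum_j B j i *: submxrow v j.

Lemma mpc_decodeK l (A : 'M[F]_(s, l)) (B : 'M[F]_(l, s)) v :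
  B *m A = 1%:M -> mpc_encode A (mpc_decode B v) = v.
Proof.
move=> BA; rewrite -[RHS]submxrowK; apply: eq_mxrow => j.
transitivity (\sum_j' (B *m A) j' j *: submxrow v j').
  under eq_bigr do rewrite scaler_sumr.
  rewrite exchange_big /=; apply: eq_bigr => j' _.
  rewrite mxE scaler_suml; apply: eq_bigr => i _.
  by rewrite scalerA mulrC.
rewrite BA (bigD1 j) //= mxE eqxx scale1r big1 ?addr0 // => j' ne_j'j.
by rewrite mxE (negbTE ne_j'j) scale0r.
Qed.

Variables (k : 'I_s -> nat) (G : forall i : 'I_s, 'M[F]_(k i, m)).

Lemma mpc_mul l (A : 'M[F]_(s, l)) (x : 'rV[F]_(\sum_(i < s) k i)) :
  x *m mpc_gen G A = mpc_encode A (fun i => submxrow x i *m G i).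
Proof.
rewrite /mpc_gen -{1}[x]submxrowK mul_mxrow_mxblock; apply: eq_mxrow => j.
by apply: eq_bigr => i _; rewrite scalemxAr.
Qed.

Lemma mpc_genP l (A : 'M[F]_(s, l)) v :
  reflect (exists2 c : 'I_s -> 'rV[F]_m,
             forall i, (c i <= G i)%MS & v = mpc_encode A c)
          (v <= mpc_gen G A)%MS.
Proof.
apply: (iffP submxP) => [[x ->] | [c Gc ->]].
  exists (fun i => submxrow x i *m G i); last exact: mpc_mul.
  by move=> i; apply: submxMl.
exists (\mxrow_i (c i *m pinvmx (G i))); rewrite mpc_mul.
apply: eq_mxrow => j; apply: eq_bigr => i _.
by rewrite mxrowK mulmxKpV.
Qed.

Lemma hdot_mpc_encode l (A : 'M[F]_(s, l)) c d :
  hdot r (mpc_encode A c) (mpc_encode A d)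
  = \sum_i \sum_i' (A *m hdagger r A) i i' * hdot r (c i) (d i').
Proof.
rewrite hdot_blocks.
transitivity (\sum_j \sum_i \sum_i' A i j * hconj r (A i' j) * hdot r (c i) (d i')).
  apply: eq_bigr => j _; rewrite !mxrowK hdot_suml; apply: eq_bigr => i _.
  rewrite hdotZl hdot_sumr mulr_sumr; apply: eq_bigr => i' _.
  by rewrite hdotZr mulrA.
rewrite exchange_big; apply: eq_bigr => i _.
rewrite exchange_big; apply: eq_bigr => i' _.
by rewrite mxE mulr_suml; apply: eq_bigr => j _; rewrite !mxE.
Qed.

Lemma hdot_mpc_encode_antidiag l (A : 'M[F]_(s, l)) lambda c d :
  A *m hdagger r A = lambda *: antidiag F s ->
  hdot r (mpc_encode A c) (mpc_encode A d)
  = lambda * \sum_i hdot r (c i) (d (rev_ord i)).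
Proof.
move=> AAdagger; rewrite hdot_mpc_encode AAdagger mulr_sumr.
apply: eq_bigr => i _; under eq_bigr do rewrite mxE -mulrA.
by rewrite -mulr_sumr sum_antidiag_mul.
Qed.

Section SelfDual.

Variables (A : 'M[F]_s) (lambda : F).
Hypotheses (lambda_neq0 : lambda != 0)
  (AAdagger : A *m hdagger r A = lambda *: antidiag F s)
  (G_hdual : forall i v, in_code (G i) v <-> in_hdual r (G (rev_ord i)) v).

Lemma hdot_mpc_gen_eq0 u v :
  (u <= mpc_gen G A)%MS -> (v <= mpc_gen G A)%MS -> hdot r u v = 0.
Proof.
case/mpc_genP=> c Gc ->; case/mpc_genP=> d Gd ->.
rewrite (hdot_mpc_encode_antidiag _ _ AAdagger) big1 ?mulr0 // => i _.
by have /G_hdual := Gd (rev_ord i); rewrite rev_ordK; apply.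
Qed.

Lemma hdagger_antidiag_mulmx :
  (lambda^-1 *: (hdagger r A *m antidiag F s)) *m A = 1%:M.
Proof.
apply: mulmx1C; rewrite -scalemxAr mulmxA AAdagger -scalemxAl antidiag_sqr.
by rewrite scalerA mulVf // scale1r.
Qed.

Lemma hdual_sub_mpc_gen v : in_hdual r (mpc_gen G A) v -> (v <= mpc_gen G A)%MS.
Proof.
move=> v_hdual; have decodeK := mpc_decodeK v hdagger_antidiag_mulmx.
set w := mpc_decode _ v in decodeK; rewrite -decodeK; apply/mpc_genP.
exists w => // i; apply/G_hdual => u Gu.
pose c t := if t == rev_ord i then u else 0.
have Cc : (mpc_encode A c <= mpc_gen G A)%MS.
  apply/mpc_genP; exists c => // t.
  by rewrite /c; case: eqP => [-> | _]; [exact: Gu | exact: sub0mx].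
have := v_hdual _ Cc; rewrite -decodeK (hdot_mpc_encode_antidiag _ _ AAdagger).
rewrite (bigD1 (rev_ord i)) //= big1 => [|t /negbTE ne_t]; last first.
  by rewrite /c ne_t hdot0l.
rewrite /c eqxx rev_ordK addr0 => /eqP.
by rewrite mulf_eq0 (negbTE lambda_neq0) => /eqP.
Qed.

End SelfDual.

End Hermitian.

Theorem corollary3p3 (F : finFieldType) (r p e : nat) :
  prime p -> (0 < e)%N -> r = (p ^ e)%N -> #|F| = (r ^ 2)%N ->
  forall (s m : nat) (k : 'I_s -> nat) (G : forall i : 'I_s, 'M[F]_(k i, m))
         (A : 'M[F]_s) (lambda : F),
  (0 < s)%N ->
  lambda != 0 ->
  A *m hdagger r A = lambda *: antidiag F s ->
  (forall (i : 'I_s) (v : 'rV[F]_m),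
      in_code (G i) v <-> in_hdual r (G (rev_ord i)) v) ->
  forall v : 'rV[F]_(\sum_(j < s) m),
    in_code (mpc_gen G A) v <-> in_hdual r (mpc_gen G A) v.
Proof.
move=> pr_p _ r_def cardF s m k G A lambda _ lambda_neq0 AAdagger G_hdual v.
have pcharF : p \in [pchar F].
  by apply: (card_finPcharP (n := e * 2)) => //; rewrite cardF r_def expnM.
split=> [v_code u u_code | v_hdual].
  exact: (hdot_mpc_gen_eq0 pcharF r_def AAdagger G_hdual u_code v_code).
exact: (hdual_sub_mpc_gen pcharF r_def lambda_neq0 AAdagger G_hdual v_hdual).
Qed.
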